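(* Consider a run of the algorithm CTG (defined in the context) in which the events $\mathcal{E}_1,\mathcal{E}_2,\mathcal{E}_3$ (defined in the context) all hold. Then for every call CS$(w,\epsilon,\delta,S,u)$ made during the run: if $u$ is added to $S$ (the call returns true), then $\Delta f(S,u)\ge w-\epsilon$; if $u$ is not added to $S$ (the call returns false), then $\Delta f(S,u)\le w+\epsilon$.
   Context: Let $U$ be a finite ground set with $|U|=n$, and let $f:2^U\to\mathbb{R}_{\geq 0}$ be monotone and submodular. For $X\subseteq U$, $u\in U$, write $\Delta f(X,u)=f(X\cup\{u\})-f(X)$. Let $\kappa$ be a positive integer. There is no value oracle for $f$; instead, for any $X\subseteq U$, $u\in U$, one can draw independent samples from a distribution $\mathcal{D}(X,u)$ with $\mathbb{E}[\mathcal{D}(X,u)]=\Delta f(X,u)$ and all samples lying in $[0,R]$; all samples drawn are independent. Logarithms are natural; $h(\alpha)=\log(\kappa/\alpha)/\alpha$. For a call of CS on $(S,u)$, regard its samples as initial terms of an infinite i.i.d. sequence from $\mathcal{D}(S,u)$ and let $\widehat{\Delta f_t}(S,u)$ be the average of the first $t$ terms. Procedure CS$(w,\epsilon,\delta,S,u)$: let $N_2=R^2\log(6nh(\alpha)/\delta)/(2\epsilon^2)$. For $t=1,2,\dots,N_2$: draw the $t$-th sample, update $\widehat{\Delta f_t}(S,u)$, set $C_t=R\sqrt{\log(12nh(\alpha)t^2/\delta)/(2t)}$; if $\widehat{\Delta f_t}(S,u)-C_t\ge w-\epsilon$ return true; else if $\widehat{\Delta f_t}(S,u)+C_t\le w+\epsilon$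 return false. If the loop completes, return true iff $\widehat{\Delta f_{N_2}}(S,u)\ge w$. Algorithm CTG$(\epsilon,\delta,\alpha)$ with $\epsilon,\delta,\alpha\in(0,1)$: let $N_1=R^2\log(6n/\delta)/(2\epsilon^2)$. For each $s\in U$ let $\hat f(s)$ be the mean of $N_1$ samples from $\mathcal{D}(\emptyset,s)$, and let $d=\max_{s\in U}\hat f(s)$. Set $w\gets d$, $S\gets\emptyset$. While $w>\alpha d/\kappa$: for each $u\in U$ in turn, if $|S|<\kappa$, call CS$(w,\epsilon,\delta,S,u)$ and if it returns true set $S\gets S\cup\{u\}$; after the pass set $w\gets w(1-\alpha)$. Return $S$. Events: $\mathcal{E}_1$: $\max_{s\in U}f(\{s\})-\epsilon\le d\le\max_{s\in U}f(\{s\})+\epsilon$. $\mathcal{E}_2$: for every call of CS on a pair $(S,u)$ and every $t\in\mathbb{N}_+$, $|\widehat{\Delta f_t}(S,u)-\Delta f(S,u)|\le C_t$. $\mathcal{E}_3$: for every call of CS on a pair $(S,u)$, $|\widehat{\Delta f_{N_2}}(S,u)-\Delta f(S,u)|\le\epsilon$. *)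

From HB Require Import structures.
From mathcomp Require Import all_boot all_order all_algebra.
From mathcomp Require Import reals exp.
Set Implicit Arguments. Unset Strict Implicit. Unset Printing Implicit Defensive.
Import Order.TTheory GRing.Theory Num.Theory.
Local Open Scope ring_scope.

Section CTG.
Variables (R : realType) (U : finType).

Definition gain (f : {set U} -> R) (X : {set U}) (u : U) : R := f (u |: X) - f X.

Definition monotone_fun (f : {set U} -> R) :=
  forall A B : {set U}, A \subset B -> f A <= f B.
Definition submodular_fun (f : {set U} -> R) :=
  forall (A B : {set U}) (u : U), A \subset B -> u \notin B -> gain f B u <= gain f A u.

(* average of the first t terms of a sample stream x (x i = (i+1)-th sample) *)
Definition avg (x : nat -> R) (t : nat) : R := (\sum_(i < t) x i) / t%:R.

(* a real sample-count bound N is used as the integer ceil(N) *)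
Definition nceil (r : R) : nat := absz (Num.ceil r).

Definition h_fun (kappa : nat) (alpha : R) : R := ln (kappa%:R / alpha) / alpha.

Definition N2 (Rb eps delta alpha : R) (kappa : nat) : nat :=
  nceil (Rb ^+ 2 * ln (6 * #|U|%:R * h_fun kappa alpha / delta) / (2 * eps ^+ 2)).
Definition N1 (Rb eps delta : R) : nat :=
  nceil (Rb ^+ 2 * ln (6 * #|U|%:R / delta) / (2 * eps ^+ 2)).

Definition Ct (Rb delta alpha : R) (kappa : nat) (t : nat) : R :=
  Rb * Num.sqrt (ln (12 * #|U|%:R * h_fun kappa alpha * (t%:R) ^+ 2 / delta)
                  / (2 * t%:R)).

(* the loop of CS: k remaining iterations, current index t *)
Fixpoint CS_loop (w eps : R) (C : nat -> R) (x : nat -> R) (N : nat)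
    (k t : nat) : bool :=
  match k with
  | 0 => w <= avg x N
  | k'.+1 =>
      if w - eps <= avg x t - C t then true
      else if avg x t + C t <= w + eps then false
      else CS_loop w eps C x N k' t.+1
  end.

(* CS(w,eps,delta,S,u) run on the sample stream x drawn from D(S,u) *)
Definition CS (Rb eps delta alpha : R) (kappa : nat) (w : R) (x : nat -> R) : bool :=
  CS_loop w eps (Ct Rb delta alpha kappa) x (N2 Rb eps delta alpha kappa)
          (N2 Rb eps delta alpha kappa) 1.

(* Randomness of a run of CTG:
   y s i   = (i+1)-th sample from D(emptyset, s) used for \hat f(s);
   xi p u  = sample stream of the CS call on element u during pass p
             (p = 0,1,2,... ; in each pass each u is considered once). *)
Variables (Rb eps delta alpha : R) (kappa : nat)
          (y : U -> nat -> R) (xi : nat -> U -> nat -> R).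

Definition fhat (s : U) : R := avg (y s) (N1 Rb eps delta).
Definition dval : R := \big[Num.max/0]_(s : U) fhat s.
Definition wpass (p : nat) : R := dval * (1 - alpha) ^+ p.

(* pass p is executed iff the while-test succeeded at the start of passes 0..p *)
Definition pass_runs (p : nat) : Prop :=
  forall j, (j <= p)%N -> alpha * dval / kappa%:R < wpass j.

Definition call_made (p : nat) (S : {set U}) : bool := (#|S| < kappa)%N.

Definition pass_step (p : nat) (S : {set U}) (u : U) : {set U} :=
  if call_made p S && CS Rb eps delta alpha kappa (wpass p) (xi p u)
  then u |: S else S.

Fixpoint S_start (p : nat) : {set U} :=
  match p with
  | 0 => set0
  | p'.+1 => foldl (pass_step p') (S_start p') (enum U)
  end.

Definition S_at (p : nat) (u : U) : {set U} :=
  foldl (pass_step p) (S_start p) (take (index u (enum U)) (enum U)).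

Definition is_call (p : nat) (u : U) : Prop :=
  pass_runs p /\ call_made p (S_at p u).

End CTG.

(* CS only stops early at step t when the confidence interval [avg_t - C_t, avg_t + C_t],
   which contains the true gain by E2, already lies above w - eps (answer true) or below
   w + eps (answer false); if it never stops early, it compares w with an average that is
   eps-close to the gain by E3. *)
From HB Require Import structures.
From mathcomp Require Import all_boot all_order all_algebra.
From mathcomp Require Import reals exp.
From mathcomp Require Import lra.
Import Order.TTheory GRing.Theory Num.Theory.
Local Open Scope ring_scope.

Section CS_loop_soundness.
Variables (R : realType) (w eps g : R) (C x : nat -> R) (N : nat).
Hypothesis avg_in_confidence : forall t, (0 < t)%N -> `|avg x t - g| <= C t.
Hypothesis avg_final_close : `|avg x N - g| <= eps.

Lemma CS_final_test_sound :
  if w <= avg x N then w - eps <= g else g <= w + eps.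
Proof.
have /andP[lo hi] : g - eps <= avg x N <= g + eps by rewrite -ler_distl.
by case: lerP; lra.
Qed.

Lemma CS_loop_sound k t : (0 < t)%N ->
  if CS_loop w eps C x N k t then w - eps <= g else g <= w + eps.
Proof.
elim: k t => [|k IHk] t t_gt0 /=; first exact: CS_final_test_sound.
have /andP[lo hi] : g - C t <= avg x t <= g + C t.
  by rewrite -ler_distl; exact: avg_in_confidence.
case: (boolP (w - eps <= avg x t - C t)) => [stop_true|_] /=; first lra.
case: (boolP (avg x t + C t <= w + eps)) => [stop_false|_] /=; first lra.
exact: IHk.
Qed.

End CS_loop_soundness.

Lemma CS_sound (R : realType) (U : finType) (Rb eps delta alpha : R) (kappa : nat)
    (w g : R) (x : nat -> R) :
  (forall t, (0 < t)%N -> `|avg x t - g| <= Ct U Rb delta alpha kappa t) ->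
  `|avg x (N2 U Rb eps delta alpha kappa) - g| <= eps ->
  if CS U Rb eps delta alpha kappa w x then w - eps <= g else g <= w + eps.
Proof. by move=> E2 E3; exact: CS_loop_sound. Qed.

Theorem lemma4 (R : realType) (U : finType) (f : {set U} -> R)
  (Rb eps delta alpha : R) (kappa : nat)
  (y : U -> nat -> R) (xi : nat -> U -> nat -> R) :
  (forall X, 0 <= f X) -> monotone_fun f -> submodular_fun f ->
  (0 < kappa)%N -> 0 < Rb ->
  0 < eps < 1 -> 0 < delta < 1 -> 0 < alpha < 1 ->
  (forall s i, 0 <= y s i <= Rb) -> (forall p u i, 0 <= xi p u i <= Rb) ->
  (* event E1 *)
  (\big[Num.max/0]_(s : U) f [set s] - eps
     <= dval Rb eps delta y
     <= \big[Num.max/0]_(s : U) f [set s] + eps) ->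
  (* event E2 *)
  (forall p u, is_call Rb eps delta alpha kappa y xi p u ->
     forall t, (0 < t)%N ->
       `| avg (xi p u) t - gain f (S_at Rb eps delta alpha kappa y xi p u) u |
         <= Ct U Rb delta alpha kappa t) ->
  (* event E3 *)
  (forall p u, is_call Rb eps delta alpha kappa y xi p u ->
     `| avg (xi p u) (N2 U Rb eps delta alpha kappa)
        - gain f (S_at Rb eps delta alpha kappa y xi p u) u | <= eps) ->
  forall p u, is_call Rb eps delta alpha kappa y xi p u ->
    let S := S_at Rb eps delta alpha kappa y xi p u in
    let w := wpass Rb eps delta alpha y p in
    if CS U Rb eps delta alpha kappa w (xi p u)
    then w - eps <= gain f S u
    else gain f S u <= w + eps.
Proof.
move=> _ _ _ _ _ _ _ _ _ _ _ E2 E3 p u call_pu /=.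
exact: CS_sound (E2 p u call_pu) (E3 p u call_pu).
Qed.
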